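(* Let $x=(x_1,\ldots,x_n)$ and $y=(y_1,\ldots,y_m)$ be observed samples, let $\mathbb{P}^{x,y}$ be the posterior distribution of $(P_1,P_2)$ given $\mathcal{D}_{n,m}=\{x,y\}$, with expectation $\mathbb{E}^{x,y}$. Let $d$ be a distance between probability measures, $M=\sup_{P_1,P_2}d(P_1,P_2)\in(0,\infty]$, $w:[0,M)\to(0,\infty]$ a probability density on $[0,M)$ with cumulative distribution function $W$, and $\mathrm{WIKS}(\mathcal{D}_{n,m})=\int_0^M w(\varepsilon)\,\mathbb{P}^{x,y}(d(P_1,P_2)>\varepsilon)\,d\varepsilon$. Consider testing $H_0:P_1=P_2$ with decision space $\{0,1\}$ ($0$ = accept $H_0$, $1$ = reject $H_0$) and loss function $$L((P_1,P_2),a)=\begin{cases} c_0\,W(d(P_1,P_2)), & a=0,\\ c_1\,[1-W(d(P_1,P_2))], & a=1,\end{cases}$$ where $c_0,c_1>0$. Then the Bayes rule (the decision minimizing the posterior expected loss $\mathbb{E}^{x,y}[L((P_1,P_2),a)]$) is to reject $H_0$ if and only if $$\mathrm{WIKS}(\mathcal{D}_{n,m})>c,\qquad c=\frac{c_1}{c_1+c_0}.$$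
   Context: Bayesian two-sample setting: $(P_1,P_2)$ is a random pair of probability distributions with some prior; conditionally on $(P_1,P_2)$, $x$ is an i.i.d. sample from $P_1$ and $y$ an i.i.d. sample from $P_2$, independently. *)

From HB Require Import structures.
From mathcomp Require Import all_boot all_order all_algebra.
From mathcomp Require Import all_classical all_reals all_analysis measurable_realfun.
Set Implicit Arguments. Unset Strict Implicit. Unset Printing Implicit Defensive.
Import Order.TTheory GRing.Theory Num.Theory.
Local Open Scope classical_set_scope.
Local Open Scope ring_scope.
Local Open Scope ereal_scope.

Definition supp0M (R : realType) (M : \bar R) : set R :=
  [set x : R | (0 <= x)%R /\ x%:E < M].

Definition cdfW (R : realType) (M : \bar R) (w : R -> \bar R) (t : R) : \bar R :=
  \int[lebesgue_measure]_(x in `[0%R, t] `&` supp0M M) w x.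

Definition WIKS (R : realType) (d0 : measure_display) (Theta : measurableType d0)
  (post : probability Theta R) (dist : Theta -> R) (M : \bar R) (w : R -> \bar R)
  : \bar R :=
  \int[lebesgue_measure]_(e in supp0M M) (w e * post [set th | (e < dist th)%R]).

(* Loss function L(theta, a), a = false (accept H0) / true (reject H0). *)
Definition loss (R : realType) (c0 c1 : R) (M : \bar R) (w : R -> \bar R)
  (dist_th : R) (a : bool) : \bar R :=
  if a then c1%:E * (1 - cdfW M w dist_th) else c0%:E * cdfW M w dist_th.

Definition post_risk (R : realType) (d0 : measure_display) (Theta : measurableType d0)
  (post : probability Theta R) (dist : Theta -> R) (c0 c1 : R) (M : \bar R)
  (w : R -> \bar R) (a : bool) : \bar R :=
  \int[post]_th loss c0 c1 M w (dist th) a.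

(** Writing the CDF as [W t = \int_{[0,t) ∩ [0,M)} w], Tonelli applied to
    [(e, θ) ↦ w e · 1{e < d θ}] gives [WIKS = E^{x,y}[W (d(P1,P2))]].  With
    [0 <= W <= 1], the posterior risks of rejecting and accepting are therefore
    [c1 (1 - WIKS)] and [c0 WIKS], and comparing them is a linear inequality in
    [WIKS] whose threshold is [c1 / (c1 + c0)]. *)
From HB Require Import structures.
From mathcomp Require Import all_boot all_order all_algebra.
From mathcomp Require Import all_classical all_reals all_analysis measurable_realfun.
From mathcomp Require Import lra.

Set Implicit Arguments.
Unset Strict Implicit.
Unset Printing Implicit Defensive.
Import Order.TTheory GRing.Theory Num.Theory.
Local Open Scope classical_set_scope.
Local Open Scope ring_scope.
Local Open Scope ereal_scope.

Lemma bayes_threshold (R : realFieldType) (c0 c1 a : R) :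
  (0 < c0)%R -> (0 < c1)%R ->
  (c1 * (1 - a) < c0 * a)%R <-> (c1 / (c1 + c0) < a)%R.
Proof.
move=> c0_gt0 c1_gt0; rewrite ltr_pdivrMr; last exact: addr_gt0.
by split => h; nra.
Qed.

Section probability_integral.
Context (R : realType) (d : measure_display) (T : measurableType d).
Variable P : probability T R.

Let integral_cst1 : \int[P]_x (cst 1) x = 1 :> \bar R.
Proof. by rewrite integral_cst // mul1e; exact: probability_setT. Qed.

Lemma probability_integral_le1 (f : T -> \bar R) :
  measurable_fun setT f -> (forall x, 0 <= f x <= 1) -> \int[P]_x f x <= 1.
Proof.
move=> mf f01.
rewrite -integral_cst1; apply: ge0_le_integral => // x _; by have /andP[] := f01 x.
Qed.

Lemma probability_integral1B (f : T -> \bar R) :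
  measurable_fun setT f -> (forall x, 0 <= f x <= 1) ->
  \int[P]_x (1 - f x) = 1 - \int[P]_x f x.
Proof.
move=> mf f01.
have f_fin x : f x \is a fin_num.
  by have /andP[f0 f1] := f01 x; rewrite ge0_fin_numE // (le_lt_trans f1) ?ltry.
have If_fin : \int[P]_x f x \is a fin_num.
  rewrite ge0_fin_numE; last by apply: integral_ge0 => x _; have /andP[] := f01 x.
  by rewrite (le_lt_trans (probability_integral_le1 mf f01)) ?ltry.
have split_one : \int[P]_x ((1 - f x) + f x) = \int[P]_x (1 - f x) + \int[P]_x f x.
  rewrite ge0_integralD //.
  - by move=> x _; rewrite sube_ge0 ?f_fin //; have /andP[] := f01 x.
  - exact: emeasurable_funB.
  - by move=> x _; have /andP[] := f01 x.
rewrite (eq_integral (cst 1)) in split_one; last by move=> x _; rewrite subeK.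
rewrite integral_cst1 in split_one.
by rewrite [in RHS]split_one addeK.
Qed.

End probability_integral.

Lemma measurable_supp0M (R : realType) (M : \bar R) : measurable (supp0M M).
Proof.
have -> : supp0M M = `[0%R, +oo[%classic `&` [set x : R | x%:E < M].
  by apply/seteqP; split => x /=; rewrite in_itv /= andbT.
apply: measurableI; first exact: measurable_itv.
case: M => [r| |].
- rewrite (_ : [set _ | _] = `]-oo, r[%classic); first exact: measurable_itv.
  by apply/seteqP; split => x /=; rewrite in_itv /= lte_fin.
- by rewrite (_ : [set _ | _] = setT) //; apply/seteqP; split => x //= _; exact: ltry.
- by rewrite (_ : [set _ | _] = set0) //; apply/seteqP; split => x //=; rewrite ltNge leNye.
Qed.

Section cdfW.
Context (R : realType) (M : \bar R) (w : R -> \bar R).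
Hypothesis mw : measurable_fun (supp0M M) w.
Hypothesis w_ge0 : forall x, supp0M M x -> 0 <= w x.

Let wS := w \_ (supp0M M).

Let measurable_wS : measurable_fun setT wS.
Proof. exact: (measurable_restrictT w (measurable_supp0M M)).1 mw. Qed.

Let wS_ge0 x : 0 <= wS x.
Proof. by rewrite /wS patchE; case: ifPn => // /set_mem; exact: w_ge0. Qed.

Lemma cdfW_itvNyo (t : R) :
  cdfW M w t = \int[lebesgue_measure]_(e in `]-oo, t[) wS e.
Proof.
(* the support lies in [0, +oo), and the endpoint [t] is Lebesgue-null *)
rewrite /cdfW.
have -> : `[0%R, t] `&` supp0M M = `]-oo, t] `&` supp0M M.
  apply/seteqP; split => x /= [].
    by rewrite !in_itv /= => /andP[_ ->].
  by rewrite !in_itv /= => -> [x0 xM]; rewrite x0.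
rewrite integral_mkcondr integral_itv_bndo_bndc //.
exact: measurable_funTS.
Qed.

Lemma cdfW_ge0 (t : R) : 0 <= cdfW M w t.
Proof. by apply: integral_ge0 => x [_]; exact: w_ge0. Qed.

Lemma cdfW_le_total (t : R) :
  cdfW M w t <= \int[lebesgue_measure]_(x in supp0M M) w x.
Proof.
apply: ge0_subset_integral => //.
- by apply: measurableI; [exact: measurable_itv | exact: measurable_supp0M].
- exact: measurable_supp0M.
Qed.

Section posterior.
Context (d0 : measure_display) (Theta : measurableType d0).
Variables (post : probability Theta R) (dist : Theta -> R).
Hypothesis mdist : measurable_fun setT dist.

Let exceed := [set p : R * Theta | (p.1 < dist p.2)%R].

Let measurable_exceed : measurable exceed.
Proof.
have mh : measurable_fun setT (fun p : R * Theta => dist p.2 - p.1)%R.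
  apply: measurable_funB; last exact: measurable_fst.
  exact: measurableT_comp mdist measurable_snd.
have := mh measurableT _ (measurable_itv `]0%R, +oo[).
rewrite setTI; congr measurable; apply/seteqP; split => p /=;
  by rewrite in_itv /= andbT subr_gt0.
Qed.

Let g (p : R * Theta) := wS p.1 * (\1_exceed p)%:E.

Let measurable_g : measurable_fun setT g.
Proof.
apply: emeasurable_funM; first exact: measurableT_comp measurable_wS measurable_fst.
exact/measurable_EFinP/measurable_indic.
Qed.

Let g_ge0 p : 0 <= g p.
Proof. by apply: mule_ge0 => //; rewrite lee_fin. Qed.

Let cdfW_dist_section th :
  cdfW M w (dist th) = \int[lebesgue_measure]_e g (e, th).
Proof.
rewrite cdfW_itvNyo integral_mkcond; apply: eq_integral => e _.
rewrite /g patchE indicE.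
have -> : ((e, th) \in exceed) = (e \in `]-oo, dist th[%classic).
  by apply/idP/idP => /set_mem; rewrite /= ?in_itv /= => h; apply/mem_set; rewrite /= ?in_itv.
by case: ifPn; rewrite ?mule1 ?mule0.
Qed.

Let post_exceed_section e :
  \int[post]_th g (e, th) = wS e * post [set th | (e < dist th)%R].
Proof.
have mA : measurable [set th | (e < dist th)%R].
  have := mdist measurableT (measurable_itv `]e, +oo[).
  rewrite setTI; congr measurable; apply/seteqP; split => p /=;
    by rewrite in_itv /= andbT.
rewrite -[LHS]/(\int[post]_th (wS e * (\1_[set th | (e < dist th)%R] th)%:E)).
rewrite ge0_integralZl //; last exact/measurable_EFinP/measurable_indic.
by rewrite integral_indic // setIT.
Qed.

Lemma measurable_cdfW_dist : measurable_fun setT (fun th => cdfW M w (dist th)).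
Proof.
rewrite (funext cdfW_dist_section).
exact: (@measurable_fun_fubini_tonelli_G _ _ _ _ _ lebesgue_measure g measurable_g g_ge0).
Qed.

Lemma WIKS_expectation_cdfW :
  WIKS post dist M w = \int[post]_th cdfW M w (dist th).
Proof.
under [RHS]eq_integral do rewrite cdfW_dist_section.
rewrite -fubini_tonelli // /WIKS integral_mkcond.
apply: eq_integral => e _; rewrite post_exceed_section /wS !patchE.
by case: ifPn => _ //; rewrite mul0e.
Qed.

Hypothesis w_mass1 : \int[lebesgue_measure]_(x in supp0M M) w x = 1.

Let cdfW_dist01 th : 0 <= cdfW M w (dist th) <= 1.
Proof. by rewrite cdfW_ge0 -w_mass1 cdfW_le_total. Qed.

Lemma WIKS_ge0_le1 : 0 <= WIKS post dist M w <= 1.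
Proof.
rewrite WIKS_expectation_cdfW probability_integral_le1 ?andbT //.
- by apply: integral_ge0 => th _; rewrite cdfW_ge0.
- exact: measurable_cdfW_dist.
Qed.

Lemma post_risk_accept (c0 c1 : R) : (0 <= c0)%R ->
  post_risk post dist c0 c1 M w false = c0%:E * WIKS post dist M w.
Proof.
move=> c0_ge0; rewrite /post_risk /loss /= ge0_integralZl ?lee_fin //.
- by rewrite WIKS_expectation_cdfW.
- exact: measurable_cdfW_dist.
- by move=> th _; rewrite cdfW_ge0.
Qed.

Lemma post_risk_reject (c0 c1 : R) : (0 <= c1)%R ->
  post_risk post dist c0 c1 M w true = c1%:E * (1 - WIKS post dist M w).
Proof.
move=> c1_ge0; rewrite /post_risk /loss /= ge0_integralZl ?lee_fin //.
- rewrite probability_integral1B ?WIKS_expectation_cdfW //.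
  exact: measurable_cdfW_dist.
- by apply: emeasurable_funB => //; exact: measurable_cdfW_dist.
- by move=> th _; have /andP[_] := cdfW_dist01 th; rewrite sube_ge0 ?orbT.
Qed.

End posterior.
End cdfW.

Theorem theorem3 (R : realType) (d0 : measure_display) (Theta : measurableType d0)
  (post : probability Theta R) (dist : Theta -> R) (M : \bar R)
  (w : R -> \bar R) (c0 c1 : R) :
  measurable_fun setT dist ->
  (forall th, (0 <= dist th)%R) ->
  M = ereal_sup (range (fun th => (dist th)%:E)) ->
  0 < M ->
  measurable_fun (supp0M M) (w : R -> \bar R) ->
  (forall x, supp0M M x -> 0 < w x) ->
  \int[lebesgue_measure]_(x in supp0M M) w x = 1 ->
  (0 < c0)%R -> (0 < c1)%R ->
  (post_risk post dist c0 c1 M w true < post_risk post dist c0 c1 M w false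
   <-> (c1 / (c1 + c0))%:E < WIKS post dist M w).
Proof.
(* Neither the nonnegativity of [dist] nor the value of [M] matters:
   [supp0M M] is measurable for every [M]. *)
move=> mdist _ _ _ mw w_gt0 w_mass1 c0_gt0 c1_gt0.
have w_ge0 x : supp0M M x -> 0 <= w x by move=> Sx; exact/ltW/w_gt0.
rewrite (post_risk_reject mw w_ge0 post mdist w_mass1 c0 (ltW c1_gt0)).
rewrite (post_risk_accept mw w_ge0 post mdist c1 (ltW c0_gt0)).
have /andP[WIKS_ge0 WIKS_le1] := WIKS_ge0_le1 mw w_ge0 post mdist w_mass1.
have WIKS_fin : WIKS post dist M w \is a fin_num.
  by rewrite ge0_fin_numE // (le_lt_trans WIKS_le1) ?ltry.
rewrite -(fineK WIKS_fin) -EFinB -!EFinM !lte_fin.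
exact: bayes_threshold.
Qed.
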